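(* (1) For every character $\varphi$ of $\mathcal H$, $\varphi\star\delta_\bullet$ is an infinitesimal character of $\mathcal H_{CK}$ (i.e. $\beta(xy)=\beta(x)\varepsilon(y)+\varepsilon(x)\beta(y)$) which coincides with $\varphi$ on nonempty trees (its value on the tree $\bullet$ being $\varphi(\bullet)=1$); the map $\varphi\mapsto\varphi\star\delta_\bullet$ is a bijection between characters of $\mathcal H$ and infinitesimal characters $\beta$ of $\mathcal H_{CK}$ with $\beta(\bullet)=1$. (2) For every character $\varphi$ of $\mathcal H$, $\varphi\star\delta$ is a character of $\mathcal H_{CK}$ which coincides with $\varphi$ on nonempty trees; the map $\varphi\mapsto\varphi\star\delta$ is a bijection between characters of $\mathcal H$ and characters $b$ of $\mathcal H_{CK}$ with $b(\bullet)=1$.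
   Context: Let $k$ be a field of characteristic $0$. Rooted trees are finite and non-planar; $\bullet$ denotes the one-vertex tree. (1) $\mathcal H$ is the free commutative $k$-algebra generated by isomorphism classes of rooted trees with at least one edge, with unit identified with $\bullet$; a character of $\mathcal H$ is a unital algebra morphism $\mathcal H\to k$. A subforest of a rooted tree $t$ is either the trivial subforest $\bullet$ or a nonempty set of pairwise vertex-disjoint subtrees each with at least one edge, identified with the product of its components; $t/s$ is the tree obtained by contracting each component of $s$ to a vertex. (2) $\mathcal H_{CK}$ is the Connes–Kreimer Hopf algebra of rooted forests (free commutative algebra on nonempty rooted trees, unit the empty forest $\mathbf 1$, counit $\varepsilon$, coproduct by admissible cuts); characters of $\mathcal H_{CK}$ are unital algebra morphisms to $k$. $\delta_\bullet\in\mathcal H_{CK}^*$ takes value $1$ on the tree $\bullet$ and $0$ on all other forests; $\delta$ is the character of $\mathcal H_{CK}$ with $\delta(\bullet)=1$ and $\delta(t)=0$ for every tree with at least two vertices. (3) $\Phi:\mathcal H_{CK}\to\mathcal H\otimes\mathcal H_{CK}$ is the algebra morphism with $\Phi(\mathbf 1)=\bullet\otimes\mathbf 1$ and $\Phi(t)=\sum_s s\otimes t/s$ over subforests $s$ of $t$ (with $s\in\mathcal H$, $t/s\in\mathcal H_{CK}$) for each nonempty tree $t$. For $\alpha\in\mathcal H^*$ and $b\in\mathcal H_{CK}^*$, $\alpha\star b=(\alpha\otimes b)\circ\Phi$. *)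

From HB Require Import structures.
From mathcomp Require Import all_boot all_order all_algebra.
Set Implicit Arguments. Unset Strict Implicit. Unset Printing Implicit Defensive.
Import GRing.Theory.
Local Open Scope ring_scope.

(* Rooted trees: represented by planar rose trees; isomorphism classes of  *)
(* (non-planar) rooted trees are handled by the relation [tiso] below, and *)
(* all functionals are required to be invariant under it.                  *)
Inductive tree : Type := Node of seq tree.

Definition bullet : tree := Node [::].

Definition has_edge (t : tree) : bool :=
  if t is Node (_ :: _) then true else false.

Inductive tiso : tree -> tree -> Prop :=
| tiso_node ts us : fiso ts us -> tiso (Node ts) (Node us)
with fiso : seq tree -> seq tree -> Prop :=
| fiso_nil : fiso [::] [::]
| fiso_cons t u ts us : tiso t u -> fiso ts us -> fiso (t :: ts) (u :: us)
| fiso_swap t u ts : fiso [:: t, u & ts] [:: u, t & ts]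
| fiso_trans ts us vs : fiso ts us -> fiso us vs -> fiso ts vs.

(* Subforests.  A subforest of t (a family of pairwise vertex-disjoint     *)
(* subtrees, each with >= 1 edge, or the trivial subforest) is encoded by  *)
(* the set of edges it contains; an edge is identified with its lower      *)
(* vertex, so we mark every child edge by a boolean.                       *)
Inductive mtree : Type := MNode of seq (bool * mtree).

Fixpoint markings (t : tree) : seq mtree :=
  let: Node ts := t in
  map MNode
    ((fix go (ts : seq tree) : seq (seq (bool * mtree)) :=
        match ts with
        | [::] => [:: [::]]
        | t' :: ts' =>
            [seq x :: r | x <- [seq (b, m) | b <- [:: false; true],
                                              m <- markings t'],
                          r <- go ts']
        end) ts).

Fixpoint contract (m : mtree) : tree :=
  let: MNode cs := m in
  Node (flatten (map (fun c => let: Node ks := contract c.2 in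
                               if c.1 then ks else [:: Node ks]) cs)).

Fixpoint piece (m : mtree) : tree :=
  let: MNode cs := m in
  Node (flatten (map (fun c => if c.1 then [:: piece c.2] else [::]) cs)).

(* The components of s whose top vertex lies in m; [top] says whether the
   root of m is a top vertex (its parent edge is unmarked / it is the root). *)
Fixpoint comps (m : mtree) (top : bool) : seq tree :=
  let: MNode cs := m in
  (if top && has fst cs then [:: piece m] else [::])
    ++ flatten (map (fun c => comps c.2 (~~ c.1)) cs).

Definition markingsF (F : seq tree) : seq (seq mtree) :=
  foldr (fun t acc => [seq m :: r | m <- markings t, r <- acc]) [:: [::]] F.

(* Linear functionals.  A linear form on H_CK is given by its values on the *)
(* basis of forests (a forest is a [seq tree], taken up to [fiso]); a      *)
(* linear form on H is given by its values on the basis of monomials in    *)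
(* trees with >= 1 edge, i.e. forests [F] with [all has_edge F], the empty *)
(* forest [::] being the unit (= the tree bullet) of H.                    *)
Section Functionals.
Variable k : fieldType.

(* alpha * b = (alpha (x) b) o Phi, with Phi(t1...tn) = prod_i Phi(t_i),
   Phi(t) = sum_s s (x) t/s, Phi(1) = bullet (x) 1. *)
Definition conv (alpha : seq tree -> k) (b : seq tree -> k) (F : seq tree) : k :=
  \sum_(ms <- markingsF F)
     alpha (flatten [seq comps m true | m <- ms]) * b [seq contract m | m <- ms].

Definition epsCK (F : seq tree) : k := if F is [::] then 1 else 0.

Definition delta_bullet (F : seq tree) : k :=
  match F with [:: Node [::]] => 1 | _ => 0 end.

Definition delta (F : seq tree) : k :=
  \prod_(t <- F) (if has_edge t then 0 else 1).

Definition functionalCK (b : seq tree -> k) : Prop :=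
  forall F G, fiso F G -> b F = b G.

Definition characterCK (b : seq tree -> k) : Prop :=
  [/\ functionalCK b, b [::] = 1 & forall F G, b (F ++ G) = b F * b G].

Definition infcharCK (beta : seq tree -> k) : Prop :=
  functionalCK beta /\
  forall F G, beta (F ++ G) = beta F * epsCK G + epsCK F * beta G.

Definition characterH (phi : seq tree -> k) : Prop :=
  [/\ forall F G, all has_edge F -> fiso F G -> phi F = phi G,
      phi [::] = 1 &
      forall F G, all has_edge F -> all has_edge G -> phi (F ++ G) = phi F * phi G].

Definition eqH (phi psi : seq tree -> k) : Prop :=
  forall F, all has_edge F -> phi F = psi F.

End Functionals.

(* A tree as an element of H (bullet is the unit). *)
Definition toH (t : tree) : seq tree := if has_edge t then [:: t] else [::].

From mathcomp Require Import all_boot all_order all_algebra.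
Set Implicit Arguments. Unset Strict Implicit. Unset Printing Implicit Defensive.
Import GRing.Theory.
Local Open Scope ring_scope.

(* Both [delta_bullet] and [delta] vanish on every forest
   containing a tree with an edge, so in [phi * delta] and [phi * delta_bullet]
   only subforests [s] of [t] with [t/s = bullet] survive.  Such an [s] must
   contain every edge of [t]: it is the "full" marking, whose components are
   just [t] itself (or the trivial subforest when [t = bullet]), i.e. [toH t].
   Hence
     (phi * delta) F = phi (toH t_1 ... toH t_n),
     (phi * delta_bullet) F = phi (toH t) if F = [:: t], and 0 otherwise. *)

Definition allP (P : tree -> Prop) (ts : seq tree) : Prop :=
  foldr (fun t acc => P t /\ acc) True ts.

Fixpoint tree_ind_nested (P : tree -> Prop)
  (IH : forall ts, allP P ts -> P (Node ts)) (t : tree) : P t :=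
  match t with
  | Node ts => IH ts ((fix go (ts : seq tree) : allP P ts :=
       match ts with
       | [::] => I
       | t' :: ts' => conj (tree_ind_nested IH t') (go ts')
       end) ts)
  end.

Fixpoint full (t : tree) : mtree :=
  let: Node ts := t in MNode (map (fun t' => (true, full t')) ts).

(* The markings of the children list of a node, named so that it can be
   reasoned about by induction on the list. *)
Fixpoint childMarkings (ts : seq tree) : seq (seq (bool * mtree)) :=
  match ts with
  | [::] => [:: [::]]
  | t' :: ts' => [seq x :: r | x <- [seq (b, m) | b <- [:: false; true],
                                     m <- markings t'], r <- childMarkings ts']
  end.

Lemma markings_node ts : markings (Node ts) = map MNode (childMarkings ts).
Proof. by []. Qed.

Lemma piece_full t : piece (full t) = t.
Proof.
elim/tree_ind_nested: t => ts IH /=; congr Node.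
by elim: ts IH => [|t ts IHs] //= [-> /IHs ->].
Qed.

Lemma comps_full_inner t : comps (full t) false = [::].
Proof.
elim/tree_ind_nested: t => ts IH /=.
by elim: ts IH => [|t ts IHs] //= [-> /IHs].
Qed.

Lemma comps_full t : comps (full t) true = toH t.
Proof.
case: t => ts /=.
have -> : flatten [seq comps c.2 (~~ c.1) | c <- [seq (true, full t') | t' <- ts]]
          = [::].
  by elim: ts => [|t ts IHs] //=; rewrite comps_full_inner IHs.
rewrite cats0 /toH /=; case: ts => [|t ts] //=.
by rewrite -[in RHS](piece_full (Node (t :: ts))).
Qed.

Section Collapse.
Variable k : fieldType.

Definition qweight (m : mtree) : k := if has_edge (contract m) then 0 else 1.

Lemma qweight_node cs :
  qweight (MNode cs) = \prod_(c <- cs) (if c.1 then qweight c.2 else 0).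
Proof.
rewrite /qweight /=; elim: cs => [|[b m] cs IH]; first by rewrite big_nil.
rewrite big_cons /= -IH.
by case: (contract m) => [[|? ?]]; case: b; rewrite /= ?mul1r ?mul0r.
Qed.

Definition picks_full (t : tree) : Prop :=
  forall f : mtree -> k, \sum_(m <- markings t) qweight m * f m = f (full t).

Lemma picks_full_children ts : allP picks_full ts ->
  forall g : seq (bool * mtree) -> k,
    \sum_(cs <- childMarkings ts) qweight (MNode cs) * g cs
    = g [seq (true, full t) | t <- ts].
Proof.
elim: ts => [_ g|t ts IH [IHt IHs] g] /=.
  by rewrite big_cons big_nil qweight_node big_nil mul1r addr0.
rewrite big_allpairs_dep /=.
under eq_bigr => x _.
  under eq_bigr => r _ do rewrite qweight_node big_cons -mulrA -qweight_node.
  rewrite -mulr_sumr (IH IHs (fun r => g (x :: r))).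
over.
rewrite cats0 big_cat !big_map /= big1 ?add0r => [|m _]; last by rewrite mul0r.
exact: (IHt (fun m => g ((true, m) :: [seq (true, full t0) | t0 <- ts]))).
Qed.

Lemma sum_markings_qweight t : picks_full t.
Proof.
elim/tree_ind_nested: t => ts IHts f.
rewrite markings_node big_map.
exact: (picks_full_children IHts (fun cs => f (MNode cs))).
Qed.

Lemma sum_markingsF_qweight (F : seq tree) (G : seq mtree -> k) :
  \sum_(ms <- markingsF F) G ms * \prod_(m <- ms) qweight m = G (map full F).
Proof.
elim: F G => [|t F IH] G /=.
  by rewrite /markingsF /= big_cons !big_nil mulr1 addr0.
rewrite big_allpairs_dep /=.
under eq_bigr => m _.
  under eq_bigr => r _ do rewrite big_cons mulrCA.
  rewrite -mulr_sumr (IH (fun r => G (m :: r))).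
over.
exact: (@sum_markings_qweight t (fun m => G (m :: map full F))).
Qed.

Lemma conv_delta (phi : seq tree -> k) F :
  conv phi (@delta k) F = phi (flatten (map toH F)).
Proof.
rewrite /conv.
under eq_bigr => ms _ do rewrite /delta big_map -/(qweight _).
rewrite (sum_markingsF_qweight F (fun ms => phi (flatten [seq comps m true | m <- ms]))).
by rewrite -map_comp; congr (phi (flatten _)); apply: eq_map => t /=;
   rewrite comps_full.
Qed.

Lemma sum_markingsF_eq0 (F : seq tree) (g : seq mtree -> k) :
  (forall ms, size ms = size F -> g ms = 0) -> \sum_(ms <- markingsF F) g ms = 0.
Proof.
elim: F g => [|t F IH] g g0 /=.
  by rewrite /markingsF /= big_cons big_nil g0 // addr0.
rewrite big_allpairs_dep big1 // => m _.
by apply: IH => r size_r; apply: g0; rewrite /= size_r.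
Qed.

Lemma conv_delta_bullet (phi : seq tree -> k) F :
  conv phi (@delta_bullet k) F =
  if size F == 1%N then phi (flatten (map toH F)) else 0.
Proof.
case: F => [|t [|u F]].
- by rewrite /conv /markingsF /= big_cons big_nil mulr0 addr0.
- rewrite /conv /markingsF /=.
  have -> : flatten [seq [:: [:: m]] | m <- markings t]
            = [seq [:: m] | m <- markings t].
    by elim: (markings t) => //= ? ? ->.
  rewrite big_map.
  under eq_bigr => m _.
    have -> : delta_bullet k [:: contract m] = qweight m.
      by rewrite /qweight; case: (contract m) => [[|]].
    rewrite /= cats0 mulrC.
  over.
  by rewrite (@sum_markings_qweight t (fun m => phi (comps m true))) comps_full cats0.
- rewrite /conv sum_markingsF_eq0 // => -[|a [|b ms]] //= _.
  by case: (contract a) => [[|]]; rewrite mulr0.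
Qed.

End Collapse.

Fixpoint tiso_refl t : tiso t t :=
  match t with
  | Node ts => tiso_node ((fix go (ts : seq tree) : fiso ts ts :=
      match ts with
      | [::] => fiso_nil
      | t' :: ts' => fiso_cons (tiso_refl t') (go ts')
      end) ts)
  end.

Lemma fiso_refl ts : fiso ts ts.
Proof. by elim: ts => [|t ts IH]; constructor => //; apply: tiso_refl. Qed.

Lemma fiso_size F G : fiso F G -> size F = size G.
Proof. by elim => //= *; congruence. Qed.

Lemma tiso_has_edge t u : tiso t u -> has_edge t = has_edge u.
Proof. by case=> ts us /fiso_size; case: ts; case: us. Qed.

Lemma all_has_edge_toH F : all has_edge (flatten (map toH F)).
Proof.
elim: F => //= t F IH; rewrite all_cat IH andbT /toH.
by case: ifP => //= ->.
Qed.

Lemma fiso_toH F G : fiso F G -> fiso (flatten (map toH F)) (flatten (map toH G)).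
Proof.
elim => //=.
- by constructor.
- move=> t u ts us tu _ IH; rewrite /toH -(tiso_has_edge tu).
  by case: ifP => // _; apply: fiso_cons.
- move=> t u ts; rewrite /toH.
  by case: (has_edge t); case: (has_edge u) => /=; (apply: fiso_swap || apply: fiso_refl).
- by move=> ? ? ? _ H1 _ H2; apply: fiso_trans H1 H2.
Qed.

Lemma characterH_toH_iso (k : fieldType) (phi : seq tree -> k) F G :
  characterH phi -> fiso F G ->
  phi (flatten (map toH F)) = phi (flatten (map toH G)).
Proof. by case=> phi_iso _ _ FG; apply: phi_iso; [apply: all_has_edge_toH | apply: fiso_toH]. Qed.

Lemma bullet_of_no_edge t : ~~ has_edge t -> t = bullet.
Proof. by case: t => [[|]]. Qed.

Lemma characterH_eqH (k : fieldType) (phi psi : seq tree -> k) :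
  characterH phi -> characterH psi ->
  (forall t, phi (toH t) = psi (toH t)) -> eqH phi psi.
Proof.
case=> _ phi1 phiM; case=> _ psi1 psiM eq_trees.
elim=> [|t F IH]; first by rewrite phi1 psi1.
move=> /= /andP[ht hF]; have tE : toH t = [:: t] by rewrite /toH ht.
rewrite -cat1s phiM ?psiM ?IH //= ?ht //.
by rewrite -tE eq_trees.
Qed.

Section Bijections.
Variable k : fieldType.
Implicit Types (phi : seq tree -> k) (F : seq tree).

Lemma conv_delta_bullet_tree phi t : conv phi (@delta_bullet k) [:: t] = phi (toH t).
Proof. by rewrite conv_delta_bullet /= cats0. Qed.

Lemma conv_delta_tree phi t : conv phi (@delta k) [:: t] = phi (toH t).
Proof. by rewrite conv_delta /= cats0. Qed.

Lemma conv_delta_bullet_infchar phi :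
  characterH phi -> infcharCK (conv phi (@delta_bullet k)).
Proof.
move=> phiH; split=> [F G FG|F G].
  by rewrite !conv_delta_bullet (fiso_size FG); case: ifP => // _; apply: characterH_toH_iso.
rewrite !conv_delta_bullet size_cat.
case: F => [|t F]; case: G => [|u G] /=;
  rewrite ?cats0 ?mulr0 ?mul0r ?mulr1 ?mul1r ?add0r ?addr0 ?addn0 //.
by rewrite addSn addnS.
Qed.

Lemma conv_delta_character phi : characterH phi -> characterCK (conv phi (@delta k)).
Proof.
move=> phiH; case: (phiH) => _ phi1 phiM; split=> [F G FG||F G].
- by rewrite !conv_delta; apply: characterH_toH_iso.
- by rewrite conv_delta.
- by rewrite !conv_delta map_cat flatten_cat phiM // all_has_edge_toH.
Qed.

Lemma infcharCK_nil (beta : seq tree -> k) : infcharCK beta -> beta [::] = 0.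
Proof.
case=> _ betaD; have := betaD [::] [::]; rewrite /= mulr1 mul1r => h.
by apply: (@addrI _ (beta [::])); rewrite addr0 -h.
Qed.

Lemma infchar_lift (beta : seq tree -> k) :
  infcharCK beta -> beta [:: bullet] = 1 ->
  exists2 phi, characterH phi & forall F, conv phi (@delta_bullet k) F = beta F.
Proof.
move=> betaI beta_bullet; case: (betaI) => beta_iso betaD.
exists (fun F => \prod_(t <- F) beta [:: t]).
  split=> [F G _||F G _ _]; last by rewrite big_cat.
  - elim=> //=.
    + move=> t u ts us tu _ IH; rewrite !big_cons IH (beta_iso [:: t] [:: u]) //.
      by apply: fiso_cons => //; apply: fiso_nil.
    + by move=> t u ts; rewrite !big_cons mulrCA.
    + by move=> ? ? ? _ -> _ ->.
  - by rewrite big_nil.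
move=> F; rewrite conv_delta_bullet.
case: F => [|t [|u F]] /=; first by rewrite (infcharCK_nil betaI).
- rewrite cats0 /toH; case: ifP => ht; first by rewrite big_cons big_nil mulr1.
  by rewrite big_nil (bullet_of_no_edge (negbT ht)).
- by rewrite -cat1s betaD /= mulr0 mul0r addr0.
Qed.

Lemma character_lift (b : seq tree -> k) :
  characterCK b -> b [:: bullet] = 1 ->
  exists2 phi, characterH phi & forall F, conv phi (@delta k) F = b F.
Proof.
move=> [b_iso b1 bM] b_bullet; exists b.
  by split=> [F G _||F G _ _]; [apply: b_iso | apply: b1 | apply: bM].
move=> F; rewrite conv_delta; elim: F => //= t F IH.
rewrite bM IH -cat1s bM /toH; case: ifP => // ht.
by rewrite (bullet_of_no_edge (negbT ht)) b_bullet b1.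
Qed.

End Bijections.

Theorem mainTheorem8 (k : fieldType) (char0 : [pchar k] =i pred0) :
  (* (1) *)
  ((forall phi : seq tree -> k, characterH phi ->
      infcharCK (conv phi (@delta_bullet k)) /\
      (forall t : tree, conv phi (@delta_bullet k) [:: t] = phi (toH t))) /\
   (forall phi psi : seq tree -> k, characterH phi -> characterH psi ->
      (forall F, conv phi (@delta_bullet k) F = conv psi (@delta_bullet k) F) ->
      eqH phi psi) /\
   (forall beta : seq tree -> k, infcharCK beta -> beta [:: bullet] = 1 ->
      exists2 phi : seq tree -> k, characterH phi &
        forall F, conv phi (@delta_bullet k) F = beta F))
  /\
  (* (2) *)
  ((forall phi : seq tree -> k, characterH phi ->
      characterCK (conv phi (@delta k)) /\
      (forall t : tree, conv phi (@delta k) [:: t] = phi (toH t))) /\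
   (forall phi psi : seq tree -> k, characterH phi -> characterH psi ->
      (forall F, conv phi (@delta k) F = conv psi (@delta k) F) ->
      eqH phi psi) /\
   (forall b : seq tree -> k, characterCK b -> b [:: bullet] = 1 ->
      exists2 phi : seq tree -> k, characterH phi &
        forall F, conv phi (@delta k) F = b F)).
Proof.
split; split; [|split| |split].
- by move=> phi phiH; split; [apply: conv_delta_bullet_infchar | apply: conv_delta_bullet_tree].
- move=> phi psi phiH psiH same; apply: characterH_eqH => // t.
  by rewrite -!conv_delta_bullet_tree same.
- exact: infchar_lift.
- by move=> phi phiH; split; [apply: conv_delta_character | apply: conv_delta_tree].
- move=> phi psi phiH psiH same; apply: characterH_eqH => // t.
  by rewrite -!conv_delta_tree same.
- exact: character_lift.
Qed.
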